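(* Let $\nu$ be a measure on $\mathcal B(\mathbb R)^U$ satisfying $\int_{\mathbb R^U}1\wedge|\pi_u(x)|^2\,\nu(dx)<\infty$ for all $u\in U$. Then $\nu$ does not charge zero if and only if $\nu$ is $\sigma$-finite and for every $A\in\mathcal B(\mathbb R)^U$ there exists a countable $U_A\subset U$ such that $\nu(A)=\nu(A\setminus\pi_{U_A}^{-1}(0^{U_A}))$.
   Context: $U$ is a non-empty index set, $\mathcal B(\mathbb R)^U$ the cylindrical (product) $\sigma$-algebra on $\mathbb R^U$, $\pi_V\colon\mathbb R^U\to\mathbb R^V$ the coordinate projection for $V\subset U$ ($\pi_u$ for $V=\{u\}$), $0^V$ the zero element of $\mathbb R^V$. A measure $\nu$ on $\mathcal B(\mathbb R)^U$ does not charge zero if there exists a countable $U_0\subset U$ with $\nu(\pi_{U_0}^{-1}(0^{U_0}))=0$. *)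

From Stdlib Require Import Reals List.
Open Scope R_scope.

Definition set (X : Type) := X -> Prop.

(* Extended reals (used for measure values, which are in [0, +oo]). *)
Inductive Rbar : Type := Fin (r : R) | PInf.

Definition Rbar_le (a b : Rbar) : Prop :=
  match a, b with
  | _, PInf => True
  | PInf, Fin _ => False
  | Fin x, Fin y => x <= y
  end.

Definition Rbar_plus (a b : Rbar) : Rbar :=
  match a, b with
  | Fin x, Fin y => Fin (x + y)
  | _, _ => PInf
  end.

(* scaling by a strictly positive real *)
Definition Rbar_scale (c : R) (a : Rbar) : Rbar :=
  match a with Fin x => Fin (c * x) | PInf => PInf end.

Definition is_sup_Rbar (P : Rbar -> Prop) (l : Rbar) : Prop :=
  (forall y, P y -> Rbar_le y l) /\
  (forall b, (forall y, P y -> Rbar_le y b) -> Rbar_le l b).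

Fixpoint Rbar_psum (f : nat -> Rbar) (n : nat) : Rbar :=
  match n with
  | O => Fin 0
  | S k => Rbar_plus (Rbar_psum f k) (f k)
  end.

Definition Rbar_series (f : nat -> Rbar) (l : Rbar) : Prop :=
  is_sup_Rbar (fun y => exists n, y = Rbar_psum f n) l.

Inductive sigma_gen {X : Type} (G : set (set X)) : set (set X) :=
  | sg_base : forall A, G A -> sigma_gen G A
  | sg_empty : sigma_gen G (fun _ => False)
  | sg_compl : forall A, sigma_gen G A -> sigma_gen G (fun x => ~ A x)
  | sg_union : forall A : nat -> set X,
      (forall n, sigma_gen G (A n)) -> sigma_gen G (fun x => exists n, A n x).

Definition borel : set (set R) :=
  sigma_gen (fun A => exists a b : R, A = (fun x => a < x < b)).

(* Cylindrical (product) sigma-algebra B(R)^U on R^U = U -> R *)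
Definition cyl_sigma (U : Type) : set (set (U -> R)) :=
  sigma_gen (fun A => exists (u : U) (B : set R), borel B /\ A = (fun x => B (x u))).

Definition is_measure {X : Type} (M : set (set X)) (mu : set X -> Rbar) : Prop :=
  mu (fun _ => False) = Fin 0 /\
  (forall A, M A -> Rbar_le (Fin 0) (mu A)) /\
  (forall A : nat -> set X,
     (forall n, M (A n)) ->
     (forall n m, n <> m -> forall x, A n x -> A m x -> False) ->
     Rbar_series (fun n => mu (A n)) (mu (fun x => exists n, A n x))).

Definition sigma_finite {X : Type} (M : set (set X)) (mu : set X -> Rbar) : Prop :=
  exists E : nat -> set X,
    (forall n, M (E n)) /\ (forall n, exists r, mu (E n) = Fin r) /\
    (forall x, exists n, E n x).

(* Nonnegative simple functions s = sum_i c_i 1_{A_i}, c_i > 0, A_i measurable,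
   pairwise disjoint, given as a list of pairs (c_i, A_i). *)
Fixpoint pw_disjoint {X : Type} (l : list (R * set X)) : Prop :=
  match l with
  | nil => True
  | p :: l' => (forall q, In q l' -> forall x, snd p x -> snd q x -> False)
               /\ pw_disjoint l'
  end.

Definition simple_fun {X : Type} (M : set (set X)) (l : list (R * set X)) : Prop :=
  (forall p, In p l -> 0 < fst p /\ M (snd p)) /\ pw_disjoint l.

(* s <= f pointwise (for disjoint A_i, s x = c_i on A_i and 0 elsewhere) *)
Definition simple_le {X : Type} (l : list (R * set X)) (f : X -> R) : Prop :=
  (forall x, 0 <= f x) /\ (forall p, In p l -> forall x, snd p x -> fst p <= f x).

Definition simple_integral {X : Type} (mu : set X -> Rbar) (l : list (R * set X)) : Rbar :=
  fold_right (fun p acc => Rbar_plus (Rbar_scale (fst p) (mu (snd p))) acc) (Fin 0) l.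

(* The (Lebesgue) integral of the nonnegative function f w.r.t. mu, defined as the
   supremum of the integrals of simple functions below f, is finite. *)
Definition integral_finite {X : Type} (M : set (set X)) (mu : set X -> Rbar)
  (f : X -> R) : Prop :=
  exists K : R, forall l, simple_fun M l -> simple_le l f ->
    Rbar_le (simple_integral mu l) (Fin K).

(* countable subset of U (possibly empty) *)
Definition countable_subset {U : Type} (C : set U) : Prop :=
  exists e : nat -> option U, forall u, C u <-> exists n, e n = Some u.

Definition zero_preimage {U : Type} (V : set U) : set (U -> R) :=
  fun x => forall u, V u -> x u = 0.

Definition does_not_charge_zero {U : Type} (nu : set (U -> R) -> Rbar) : Prop :=
  exists U0 : set U, countable_subset U0 /\ nu (zero_preimage U0) = Fin 0.

(* If nu(pi_{U0}^{-1}(0)) = 0, then every set loses nothing when this null set is removed, and the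
   complement of pi_{U0}^{-1}(0) is covered by the countably many sets {|x_u| > 1/(k+1)}, u in U0,
   each of finite measure by the integrability of 1 /\ |x_u|^2 (Markov's inequality).
   Conversely, split R^U into disjoint sets D_n of finite measure; the countable set U_n given for
   D_n satisfies nu(D_n ∩ pi_{U_n}^{-1}(0)) = 0 by finiteness, and the union U0 of the U_n makes
   pi_{U0}^{-1}(0) a countable disjoint union of null sets. *)
From Stdlib Require Import Reals List.
From Stdlib Require Import Lra Lia Arith Cantor Classical FunctionalExtensionality
  PropExtensionality IndefiniteDescription.
Open Scope R_scope.

Lemma set_ext {X : Type} (A B : set X) : (forall x, A x <-> B x) -> A = B.
Proof.
  intro H; apply functional_extensionality; intro x.
  apply propositional_extensionality; auto.
Qed.

Section SigmaGen.
Context {X : Type} (G : set (set X)).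

Lemma sigma_gen_ext (A B : set X) :
  sigma_gen G A -> (forall x, A x <-> B x) -> sigma_gen G B.
Proof. intros HA H; rewrite <- (set_ext _ _ H); exact HA. Qed.

Lemma sigma_gen_full : sigma_gen G (fun _ => True).
Proof.
  apply (sigma_gen_ext (fun _ => ~ False)); [apply sg_compl, sg_empty | tauto].
Qed.

Lemma sigma_gen_union2 (A B : set X) :
  sigma_gen G A -> sigma_gen G B -> sigma_gen G (fun x => A x \/ B x).
Proof.
  intros HA HB.
  apply (sigma_gen_ext (fun x => exists n, (match n with O => A | _ => B end) x)).
  - apply sg_union; intros [|n]; auto.
  - intro x; split.
    + intros [[|n] H]; auto.
    + intros [H|H]; [exists O | exists 1%nat]; auto.
Qed.

Lemma sigma_gen_inter2 (A B : set X) :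
  sigma_gen G A -> sigma_gen G B -> sigma_gen G (fun x => A x /\ B x).
Proof.
  intros HA HB.
  apply (sigma_gen_ext (fun x => ~ (~ A x \/ ~ B x))).
  - apply sg_compl, sigma_gen_union2; apply sg_compl; auto.
  - intro x; tauto.
Qed.

Lemma sigma_gen_diff (A B : set X) :
  sigma_gen G A -> sigma_gen G B -> sigma_gen G (fun x => A x /\ ~ B x).
Proof. intros; apply sigma_gen_inter2; auto; apply sg_compl; auto. Qed.

End SigmaGen.

Section Disjointed.
Context {X : Type} (E : nat -> set X).

Definition disjointed (n : nat) : set X :=
  fun x => E n x /\ forall m, (m < n)%nat -> ~ E m x.

Lemma disjointed_sub n x : disjointed n x -> E n x.
Proof. now intros [H _]. Qed.

Lemma disjointed_disjoint n m : n <> m -> forall x, disjointed n x -> disjointed m x -> False.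
Proof.
  intros Hnm x [Hn Hn'] [Hm Hm'].
  destruct (Nat.lt_total n m) as [H|[H|H]]; [exact (Hm' n H Hn) | contradiction | exact (Hn' m H Hm)].
Qed.

Lemma disjointed_cover n x : E n x -> exists m, disjointed m x.
Proof.
  induction n as [n IH] using lt_wf_ind; intro Hn.
  destruct (classic (forall m, (m < n)%nat -> ~ E m x)) as [Hmin|Hmin].
  - exists n; split; auto.
  - apply not_all_ex_not in Hmin as [m Hm].
    apply imply_to_and in Hm as [Hlt Hm].
    exact (IH m Hlt (NNPP _ Hm)).
Qed.

Lemma sigma_gen_disjointed (G : set (set X)) :
  (forall n, sigma_gen G (E n)) -> forall n, sigma_gen G (disjointed n).
Proof.
  intros HE n; apply sigma_gen_inter2; [apply HE |].
  induction n.
  - apply (sigma_gen_ext _ (fun _ => True)); [apply sigma_gen_full |].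
    intro x; split; [intros _ m Hm; lia | tauto].
  - apply (sigma_gen_ext _ (fun x => (forall m, (m < n)%nat -> ~ E m x) /\ ~ E n x)).
    + apply sigma_gen_diff; auto.
    + intro x; split.
      * intros [H1 H2] m Hm.
        destruct (Nat.eq_dec m n) as [->|]; auto; apply H1; lia.
      * intro H; split; [intros m Hm; apply H | apply H]; lia.
Qed.

End Disjointed.

Lemma Rbar_le_antisym a b : Rbar_le a b -> Rbar_le b a -> a = b.
Proof. destruct a, b; simpl; intros; try contradiction; auto. f_equal; lra. Qed.

Lemma Rbar_plus_0_l a : Rbar_plus (Fin 0) a = a.
Proof. destruct a; simpl; auto. f_equal; lra. Qed.

Lemma Rbar_plus_0_r a : Rbar_plus a (Fin 0) = a.
Proof. destruct a; simpl; auto. f_equal; lra. Qed.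

Lemma Rbar_le_addr a b : Rbar_le (Fin 0) b -> Rbar_le a (Rbar_plus a b).
Proof. destruct a, b; simpl; intros; auto; lra. Qed.

Lemma Rbar_plus_ge0 a b :
  Rbar_le (Fin 0) a -> Rbar_le (Fin 0) b -> Rbar_le (Fin 0) (Rbar_plus a b).
Proof. destruct a, b; simpl; intros; auto; lra. Qed.

Lemma Rbar_plus_fin_eq0 a d : Rbar_le (Fin 0) a -> Fin d = Rbar_plus a (Fin d) -> a = Fin 0.
Proof. destruct a; simpl; intros H E; try discriminate. injection E; intro; f_equal; lra. Qed.

Lemma is_sup_Rbar_unique P l1 l2 : is_sup_Rbar P l1 -> is_sup_Rbar P l2 -> l1 = l2.
Proof. intros [H1 H1'] [H2 H2']. apply Rbar_le_antisym; auto. Qed.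

Lemma is_sup_Rbar_max (P : Rbar -> Prop) l :
  P l -> (forall y, P y -> Rbar_le y l) -> is_sup_Rbar P l.
Proof. intros; split; auto. Qed.

Lemma Rbar_series_eq0 f l : (forall n, f n = Fin 0) -> Rbar_series f l -> l = Fin 0.
Proof.
  intros Hf Hs.
  assert (Hpsum : forall n, Rbar_psum f n = Fin 0).
  { induction n; simpl; auto. rewrite IHn, Hf; simpl; f_equal; lra. }
  apply (is_sup_Rbar_unique _ _ _ Hs), is_sup_Rbar_max.
  - exists O; reflexivity.
  - intros y [n ->]; rewrite Hpsum; simpl; lra.
Qed.

Lemma Rbar_series_pair a b :
  Rbar_le (Fin 0) a -> Rbar_le (Fin 0) b ->
  Rbar_series (fun n => match n with O => a | 1%nat => b | _ => Fin 0 end) (Rbar_plus a b).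
Proof.
  intros Ha Hb.
  assert (Hpsum : forall k, Rbar_psum (fun n => match n with O => a | 1%nat => b | _ => Fin 0 end)
                              (S (S k)) = Rbar_plus a b).
  { induction k as [|k IH].
    - cbn [Rbar_psum]; now rewrite Rbar_plus_0_l.
    - cbn [Rbar_psum] in *; now rewrite IH, Rbar_plus_0_r. }
  apply is_sup_Rbar_max.
  - exists 2%nat; symmetry; apply (Hpsum O).
  - intros y [[|[|k]] ->].
    + cbn [Rbar_psum]; now apply Rbar_plus_ge0.
    + cbn [Rbar_psum]; rewrite Rbar_plus_0_l; now apply Rbar_le_addr.
    + rewrite Hpsum; destruct (Rbar_plus a b); simpl; auto; lra.
Qed.

Section Measure.
Context {X : Type} (G : set (set X)) (mu : set X -> Rbar).
Hypothesis Hmu : is_measure (sigma_gen G) mu.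

Lemma measure_ge0 A : sigma_gen G A -> Rbar_le (Fin 0) (mu A).
Proof. destruct Hmu as [_ [H _]]; auto. Qed.

Lemma measure_union2 A B :
  sigma_gen G A -> sigma_gen G B -> (forall x, A x -> B x -> False) ->
  mu (fun x => A x \/ B x) = Rbar_plus (mu A) (mu B).
Proof.
  intros HA HB Hdisj; destruct Hmu as [H0 [_ Hadd]].
  set (S := fun n => match n with O => A | 1%nat => B | _ => fun _ : X => False end).
  assert (HS : forall n, sigma_gen G (S n)) by (intros [|[|n]]; simpl; auto using sg_empty).
  assert (HSdisj : forall n m, n <> m -> forall x, S n x -> S m x -> False).
  { intros [|[|n]] [|[|m]] Hnm x; simpl; intros; try contradiction; eauto. }
  assert (HSunion : (fun x => exists n, S n x) = (fun x => A x \/ B x)).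
  { apply set_ext; intro x; split.
    - intros [[|[|n]] Hx]; simpl in Hx; tauto.
    - intros [Hx|Hx]; [exists O | exists 1%nat]; auto. }
  specialize (Hadd S HS HSdisj); rewrite HSunion in Hadd.
  apply (is_sup_Rbar_unique _ _ _ Hadd).
  replace (fun n => mu (S n)) with (fun n => match n with O => mu A | 1%nat => mu B | _ => Fin 0 end)
    by (apply functional_extensionality; intros [|[|n]]; auto).
  apply Rbar_series_pair; apply measure_ge0; auto.
Qed.

Lemma measure_split A B : sigma_gen G A -> sigma_gen G B ->
  mu A = Rbar_plus (mu (fun x => A x /\ B x)) (mu (fun x => A x /\ ~ B x)).
Proof.
  intros HA HB.
  rewrite <- measure_union2; auto using sigma_gen_inter2, sigma_gen_diff.
  - f_equal; apply set_ext; intro x; tauto.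
  - intro x; tauto.
Qed.

Lemma measure_le A B :
  sigma_gen G A -> sigma_gen G B -> (forall x, A x -> B x) -> Rbar_le (mu A) (mu B).
Proof.
  intros HA HB Hsub.
  rewrite (measure_split B A HB HA).
  replace (fun x => B x /\ A x) with A by (apply set_ext; intro x; split; [auto | tauto]).
  apply Rbar_le_addr, measure_ge0, sigma_gen_diff; auto.
Qed.

Lemma measure_null_sub A B :
  sigma_gen G A -> sigma_gen G B -> (forall x, A x -> B x) -> mu B = Fin 0 -> mu A = Fin 0.
Proof.
  intros HA HB Hsub HB0; apply Rbar_le_antisym.
  - rewrite <- HB0; now apply measure_le.
  - now apply measure_ge0.
Qed.

Lemma measure_fin_sub A B r : sigma_gen G A -> sigma_gen G B ->
  (forall x, A x -> B x) -> mu B = Fin r -> exists r', mu A = Fin r'.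
Proof.
  intros HA HB Hsub Hr; pose proof (measure_le A B HA HB Hsub) as Hle.
  rewrite Hr in Hle; destruct (mu A); [eauto | contradiction].
Qed.

Lemma measure_setD_null A N : sigma_gen G A -> sigma_gen G N ->
  mu N = Fin 0 -> mu A = mu (fun x => A x /\ ~ N x).
Proof.
  intros HA HN HN0.
  rewrite (measure_split A N HA HN).
  rewrite (measure_null_sub (fun x => A x /\ N x) N); auto using sigma_gen_inter2.
  - apply Rbar_plus_0_l.
  - now intros x [_ Hx].
Qed.

Lemma measure_inter_null_of_setD A B r : sigma_gen G A -> sigma_gen G B ->
  mu A = Fin r -> mu A = mu (fun x => A x /\ ~ B x) -> mu (fun x => A x /\ B x) = Fin 0.
Proof.
  intros HA HB Hr Heq.
  pose proof (measure_split A B HA HB) as Hsplit.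
  rewrite <- Heq, Hr in Hsplit.
  apply (Rbar_plus_fin_eq0 _ r); auto using measure_ge0, sigma_gen_inter2.
Qed.

Lemma measure_null_of_disjoint_cover (D : nat -> set X) N :
  (forall n, sigma_gen G (D n)) -> sigma_gen G N ->
  (forall n m, n <> m -> forall x, D n x -> D m x -> False) ->
  (forall x, N x -> exists n, D n x) ->
  (forall n, mu (fun x => D n x /\ N x) = Fin 0) -> mu N = Fin 0.
Proof.
  intros HD HN Hdisj Hcover Hnull; destruct Hmu as [_ [_ Hadd]].
  specialize (Hadd (fun n x => D n x /\ N x)); cbv beta in Hadd.
  replace (fun x => exists n, D n x /\ N x) with N in Hadd.
  - apply (Rbar_series_eq0 _ _ Hnull), Hadd.
    + intro n; apply sigma_gen_inter2; auto.
    + intros n m Hnm x [Hn _] [Hm _]; eauto.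
  - apply set_ext; intro x; split.
    + intro Hx; destruct (Hcover x Hx) as [n Hn]; eauto.
    + now intros [n [_ Hx]].
Qed.

Lemma sigma_finite_of_cover2 (E : nat -> nat -> set X) :
  (forall a k, sigma_gen G (E a k)) -> (forall a k, exists r, mu (E a k) = Fin r) ->
  (forall x, exists a k, E a k x) -> sigma_finite (sigma_gen G) mu.
Proof.
  intros HE Hfin Hcover.
  exists (fun n => let (a, k) := Cantor.of_nat n in E a k); split; [|split].
  - intro n; destruct (Cantor.of_nat n); auto.
  - intro n; destruct (Cantor.of_nat n); auto.
  - intro x; destruct (Hcover x) as [a [k Hx]].
    exists (Cantor.to_nat (a, k)); now rewrite Cantor.cancel_of_to.
Qed.

Lemma integral_finite_level_set (f : X -> R) (A : set X) c :
  integral_finite (sigma_gen G) mu f -> sigma_gen G A -> 0 < c ->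
  (forall x, 0 <= f x) -> (forall x, A x -> c <= f x) -> exists r, mu A = Fin r.
Proof.
  intros [K HK] HA Hc Hf0 HfA.
  specialize (HK ((c, A) :: nil)).
  destruct (mu A) as [r|] eqn:Hr; [eauto | exfalso].
  enough (Rbar_le (simple_integral mu ((c, A) :: nil)) (Fin K)) as Hle
    by (unfold simple_integral in Hle; simpl in Hle; now rewrite Hr in Hle).
  apply HK; split.
  - intros p [<-|[]]; auto.
  - simpl; tauto.
  - auto.
  - intros p [<-|[]]; auto.
Qed.

End Measure.

Lemma countable_subset_bigcup {U : Type} (V : nat -> set U) :
  (forall n, countable_subset (V n)) -> countable_subset (fun u => exists n, V n u).
Proof.
  intro HV; destruct (functional_choice _ HV) as [e He].
  exists (fun m => let (n, i) := Cantor.of_nat m in e n i); intro u; split.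
  - intros [n Hu]; apply He in Hu as [i Hi].
    exists (Cantor.to_nat (n, i)); now rewrite Cantor.cancel_of_to.
  - intros [m Hm]; destruct (Cantor.of_nat m) as [n i].
    exists n; apply He; eauto.
Qed.

Lemma borel_interval a b : borel (fun x => a < x < b).
Proof. apply sg_base; now exists a, b. Qed.

Lemma borel_abs_gt c : borel (fun r => c < Rabs r).
Proof.
  apply (sigma_gen_ext _ (fun r => exists n, (c < r < c + INR n) \/ (- c - INR n < r < - c))).
  - apply sg_union; intro n; apply sigma_gen_union2; apply borel_interval.
  - intro r; split.
    + intros [n [H|H]].
      * pose proof (Rle_abs r); lra.
      * pose proof (Rle_abs (- r)); rewrite Rabs_Ropp in *; lra.
    + intro H; destruct (INR_unbounded (Rabs r - c)) as [n Hn]; exists n.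
      unfold Rabs in *; destruct (Rcase_abs r); [right | left]; lra.
Qed.

Lemma cyl_sigma_abs_gt {U : Type} (u : U) c : cyl_sigma U (fun x => c < Rabs (x u)).
Proof. apply sg_base; exists u, (fun r => c < Rabs r); split; auto using borel_abs_gt. Qed.

Lemma cyl_sigma_zero_preimage {U : Type} (V : set U) :
  countable_subset V -> cyl_sigma U (zero_preimage V).
Proof.
  intros [e He].
  apply (sigma_gen_ext _
    (fun x => ~ exists n, match e n with None => False | Some u => 0 < Rabs (x u) end)).
  - apply sg_compl, sg_union; intro n; destruct (e n) as [u|].
    + apply cyl_sigma_abs_gt.
    + apply sg_empty.
  - intro x; unfold zero_preimage; split.
    + intros H u Hu; apply He in Hu as [n Hn].
      destruct (Req_dec (x u) 0) as [E|E]; auto.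
      exfalso; apply H; exists n; rewrite Hn; now apply Rabs_pos_lt.
    + intros H [n Hn]; destruct (e n) as [u|] eqn:En; auto.
      rewrite (H u) in Hn by (apply He; eauto); rewrite Rabs_R0 in Hn; lra.
Qed.

Lemma measure_abs_gt_finite {U : Type} (nu : set (U -> R) -> Rbar) (u : U) c :
  integral_finite (cyl_sigma U) nu (fun x => Rmin 1 (Rsqr (Rabs (x u)))) ->
  0 < c <= 1 -> exists r, nu (fun x => c < Rabs (x u)) = Fin r.
Proof.
  intros Hint Hc.
  apply (integral_finite_level_set _ nu _ _ (c * c) Hint (cyl_sigma_abs_gt u c)); [nra | |].
  - intro x; apply Rmin_glb; [lra | apply Rle_0_sqr].
  - intros x Hx; apply Rmin_glb; unfold Rsqr; nra.
Qed.

Lemma sigma_finite_of_does_not_charge_zero (U : Type) (nu : set (U -> R) -> Rbar) :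
  (forall u, integral_finite (cyl_sigma U) nu (fun x => Rmin 1 (Rsqr (Rabs (x u))))) ->
  does_not_charge_zero nu -> sigma_finite (cyl_sigma U) nu.
Proof.
  intros Hint [U0 [[e He] HZ]].
  (* the index (a, k+1) stands for {|x_u| > 1/(k+1)} with u = e a; all other indices for the null set pi_{U0}^{-1}(0) *)
  apply (sigma_finite_of_cover2 _ nu (fun a k x =>
    match k, e a with
    | S k, Some u => / INR (S k) < Rabs (x u)
    | _, _ => zero_preimage U0 x
    end)).
  - assert (HZm : cyl_sigma U (zero_preimage U0))
      by (apply cyl_sigma_zero_preimage; now exists e).
    intros a [|k]; [| destruct (e a)]; auto; apply cyl_sigma_abs_gt.
  - assert (Hk : forall k, 0 < / INR (S k) <= 1).
    { intro k; split; [apply Rinv_0_lt_compat, lt_0_INR; lia |].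
      rewrite <- Rinv_1; apply Rinv_le_contravar; [lra | apply (le_INR 1); lia]. }
    intros a [|k]; [| destruct (e a)]; eauto using measure_abs_gt_finite.
  - intro x; destruct (classic (zero_preimage U0 x)) as [Hx|Hx]; [exists O, O; exact Hx |].
    apply not_all_ex_not in Hx as [u Hu]; apply imply_to_and in Hu as [Hu Hxu].
    apply He in Hu as [a Ha].
    destruct (archimed_cor1 (Rabs (x u))) as [[|k] [Hk1 Hk2]]; [now apply Rabs_pos_lt | lia |].
    exists a, (S k); now rewrite Ha.
Qed.

Lemma does_not_charge_zero_of_sigma_finite (U : Type) (nu : set (U -> R) -> Rbar) :
  is_measure (cyl_sigma U) nu -> sigma_finite (cyl_sigma U) nu ->
  (forall A, cyl_sigma U A -> exists UA : set U, countable_subset UA /\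
     nu A = nu (fun x => A x /\ ~ zero_preimage UA x)) ->
  does_not_charge_zero nu.
Proof.
  intros Hnu [E [HE [Hfin Hcover]]] Hloc.
  pose proof (sigma_gen_disjointed E _ HE) as HD.
  destruct (functional_choice _ (fun n => Hloc _ (HD n))) as [V HV].
  exists (fun u => exists n, V n u).
  assert (HU0 : countable_subset (fun u => exists n, V n u))
    by (apply countable_subset_bigcup; intro n; apply HV).
  split; [exact HU0 |].
  apply (measure_null_of_disjoint_cover _ nu Hnu (disjointed E));
    [exact HD | now apply cyl_sigma_zero_preimage | apply disjointed_disjoint | |].
  - intros x _; destruct (Hcover x) as [n Hn]; eauto using disjointed_cover.
  - intro n; destruct (HV n) as [HVn Heq].
    destruct (Hfin n) as [r Hr].
    destruct (measure_fin_sub _ nu Hnu _ _ r (HD n) (HE n) (disjointed_sub E n) Hr) as [r' Hr'].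
    apply (measure_null_sub _ nu Hnu _ (fun x => disjointed E n x /\ zero_preimage (V n) x)).
    + apply sigma_gen_inter2; [apply HD | now apply cyl_sigma_zero_preimage].
    + apply sigma_gen_inter2; [apply HD | now apply cyl_sigma_zero_preimage].
    + intros x [Hx Hz]; split; [exact Hx |]; intros u Hu; apply Hz; eauto.
    + apply (measure_inter_null_of_setD _ nu Hnu _ _ r');
        [apply HD | now apply cyl_sigma_zero_preimage | exact Hr' | exact Heq].
Qed.

Theorem lemmaA2 (U : Type) (hU : inhabited U) (nu : set (U -> R) -> Rbar)
  (Hnu : is_measure (cyl_sigma U) nu)
  (Hint : forall u : U,
      integral_finite (cyl_sigma U) nu (fun x => Rmin 1 (Rsqr (Rabs (x u))))) :
  does_not_charge_zero nu <->
  (sigma_finite (cyl_sigma U) nu /\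
   forall A, cyl_sigma U A ->
     exists UA : set U, countable_subset UA /\
       nu A = nu (fun x => A x /\ ~ zero_preimage UA x)).
Proof.
  split.
  - intro Hzero; split; [now apply sigma_finite_of_does_not_charge_zero |].
    destruct Hzero as [U0 [HU0 HZ]]; intros A HA.
    exists U0; split; [exact HU0 |].
    apply (measure_setD_null _ nu Hnu); [exact HA | now apply cyl_sigma_zero_preimage | exact HZ].
  - intros [Hfin Hloc]; now apply does_not_charge_zero_of_sigma_finite.
Qed.
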